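(* Let $A'\to A$ be a surjection in $\mathcal{C}_{\mathbb{E}}$ whose kernel is a $1$-dimensional $\mathbb{E}$-vector space. Let $V'$ be a free $A'$-module of rank $m$ and $V=V'\otimes_{A'}A$. Then the natural map $$\mathrm{GL}(V')\to\mathrm{PGL}(V')\times_{\mathrm{PGL}(V)}\mathrm{GL}(V)\times_{\mathrm{GL}(\det V)}\mathrm{GL}(\det V')$$ is an isomorphism of groups.
   Context: $\mathbb{E}$ is a finite extension of $\mathbb{Q}_\ell$ and $\mathcal{C}_{\mathbb{E}}$ the category of local Artin $\mathbb{E}$-algebras with residue field $\mathbb{E}$. For a free module $V$ over a ring $B$, $\mathrm{GL}(V)=\mathrm{Aut}_B(V)$, $\mathrm{PGL}(V)=\mathrm{GL}(V)/B^*$, and $\det V$ is the top exterior power, so $\mathrm{GL}(\det V)=B^*$; the maps in the fibre product are reduction along $A'\to A$, the projection $\mathrm{GL}\to\mathrm{PGL}$, and the determinant. *)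

From HB Require Import structures.
From mathcomp Require Import all_boot all_order all_algebra.
Set Implicit Arguments. Unset Strict Implicit. Unset Printing Implicit Defensive.
Import Order.TTheory GRing.Theory Num.Theory.
Local Open Scope ring_scope.

(* A is an object of C_E: a local Artin E-algebra with residue field E.
   - finite dimensional over E (equivalent to Artinian for such algebras),
   - local: the non-units are closed under addition (they form the maximal ideal),
   - residue field E: every element is congruent to a scalar modulo the maximal ideal. *)
Definition in_CE (E : fieldType) (A : comUnitAlgType E) : Prop :=
  [/\ (exists (n : nat) (phi : A -> 'rV[E]_n), linear phi /\ injective phi),
      (forall x y : A, x \isn't a GRing.unit -> y \isn't a GRing.unit ->
                       x + y \isn't a GRing.unit)
    & (forall a : A, exists c : E, a - c%:A \isn't a GRing.unit)].

Definition ker_dim1 (E : fieldType) (A' A : comUnitAlgType E)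
  (f : {lrmorphism A' -> A}) : Prop :=
  exists2 e : A', e != 0 /\ f e = 0 &
    forall x : A', f x = 0 -> exists c : E, x = c *: e.

(* V' = A'^m, so GL(V') = invertible m x m matrices over A'.
   Two elements of GL define the same element of PGL iff they differ by a unit scalar. *)
Definition pgl_eq (B : comUnitRingType) (m : nat) (M N : 'M[B]_m) : Prop :=
  exists2 c : B, c \is a GRing.unit & N = c *: M.

(* Elements of PGL(V') x_{PGL(V)} GL(V) x_{GL(det V)} GL(det V'), represented by
   triples (h, g, u) with h a representative of the PGL(V') class. *)
Definition fibre_elt (E : fieldType) (A' A : comUnitAlgType E)
  (f : {lrmorphism A' -> A}) (m : nat)
  (h : 'M[A']_m) (g : 'M[A]_m) (u : A') : Prop :=
  [/\ h \in unitmx, g \in unitmx, u \is a GRing.unit,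
      pgl_eq (map_mx f h) g & \det g = f u].

Definition fibre_eq (A' A : comUnitRingType) (m : nat)
  (t1 t2 : 'M[A']_m * 'M[A]_m * A') : Prop :=
  [/\ pgl_eq t1.1.1 t2.1.1, t1.1.2 = t2.1.2 & t1.2 = t2.2].

Definition fibre_mul (A' A : comUnitRingType) (m : nat)
  (t1 t2 : 'M[A']_m * 'M[A]_m * A') : 'M[A']_m * 'M[A]_m * A' :=
  (t1.1.1 *m t2.1.1, t1.1.2 *m t2.1.2, t1.2 * t2.2).

Definition nat_map (E : fieldType) (A' A : comUnitAlgType E)
  (f : {lrmorphism A' -> A}) (m : nat) (x : 'M[A']_m)
  : 'M[A']_m * 'M[A]_m * A' :=
  (x, map_mx f x, \det x).

Definition nat_map_iso (E : fieldType) (A' A : comUnitAlgType E)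
  (f : {lrmorphism A' -> A}) (m : nat) : Prop :=
  [/\
      (forall x : 'M[A']_m, x \in unitmx ->
         let t := nat_map f x in fibre_elt f t.1.1 t.1.2 t.2),
      (forall x y : 'M[A']_m, x \in unitmx -> y \in unitmx ->
         fibre_eq (nat_map f (x *m y)) (fibre_mul (nat_map f x) (nat_map f y))),
      (forall x y : 'M[A']_m, x \in unitmx -> y \in unitmx ->
         fibre_eq (nat_map f x) (nat_map f y) -> x = y)
    &
      (forall (h : 'M[A']_m) (g : 'M[A]_m) (u : A'), fibre_elt f h g u ->
         exists2 x : 'M[A']_m, x \in unitmx & fibre_eq (nat_map f x) (h, g, u))].

(* The kernel [I] of [A' -> A] is a line killed by the maximal ideal of [A'], so [I^2 = 0] and
   units of [A] lift to units of [A'].  Hence [1 + I] is a group in which [(1 + t)^m = 1 + m t];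
   as [m] is invertible in characteristic 0, [t |-> (1 + t)^m] is a bijection of [1 + I].
   Injectivity: if [x] and [c x] have the same image then [c] lies in [1 + I] and [c^m = 1],
   so [c = 1].  Surjectivity: lift the scalar relating [h] to [g] to [c'], and correct [c' h]
   by the unique [m]-th root in [1 + I] of the discrepancy between its determinant and [u]. *)
From HB Require Import structures.
From mathcomp Require Import all_boot all_order all_algebra.
Set Implicit Arguments. Unset Strict Implicit. Unset Printing Implicit Defensive.
Import GRing.Theory.
Local Open Scope ring_scope.

Lemma pgl_eq_refl (B : comUnitRingType) (n : nat) (M : 'M[B]_n) : pgl_eq M M.
Proof. by exists 1; rewrite ?unitr1 ?scale1r. Qed.

Lemma exprD1_sqr0 (R : pzRingType) (t : R) (n : nat) :
  t * t = 0 -> (1 + t) ^+ n = 1 + t *+ n.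
Proof.
move=> tt; elim: n => [|n IHn]; first by rewrite expr0 mulr0n addr0.
rewrite exprS IHn mulrDl mul1r mulrDr mulr1 mulrnAr tt mul0rn addr0.
by rewrite mulrS addrA [1 + t + _]addrAC.
Qed.

Lemma unitrD1_sqr0 (R : comUnitRingType) (t : R) : t * t = 0 -> 1 + t \is a GRing.unit.
Proof.
move=> tt; apply/unitrPr; exists (1 - t).
by rewrite mulrDl mul1r mulrBr mulr1 tt subr0 subrK.
Qed.

Lemma scalar_unit (E : fieldType) (A : unitAlgType E) (c : E) :
  c != 0 -> (c%:A : A) \is a GRing.unit.
Proof. by move=> c_nz; apply: (rmorph_unit (in_alg A)); rewrite unitfE. Qed.

Lemma natr_unit_pchar0 (E : fieldType) (A : unitAlgType E) (n : nat) :
  [pchar E] =i pred0 -> n != 0%N -> (n%:R : A) \is a GRing.unit.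
Proof.
move=> /pcharf0P charE0 n_nz; rewrite -(rmorph_nat (in_alg A)).
by apply: scalar_unit; rewrite charE0.
Qed.

Lemma scalemx_eq1 (B : comUnitRingType) (n : nat) (M : 'M[B]_n.+1) (c : B) :
  M \in unitmx -> c *: M = M -> c = 1.
Proof.
move=> M_unit cM; apply/eqP; rewrite -subr_eq0.
have : (c - 1) *: (1%:M : 'M[B]_n.+1) = 0.
  by rewrite -(mulmxV M_unit) scalemxAl scalerBl scale1r cM subrr mul0mx.
by move/(congr1 (fun N : 'M[B]_n.+1 => N ord0 ord0)); rewrite !mxE eqxx mulr1 => ->.
Qed.

Section SquareZeroKernel.
Variables (E : fieldType) (A' A : comUnitAlgType E) (f : {rmorphism A' -> A}).
Hypothesis A'_local : forall x y : A',
  x \isn't a GRing.unit -> y \isn't a GRing.unit -> x + y \isn't a GRing.unit.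
Variable e : A'.
Hypotheses (e_nz : e != 0) (fe0 : f e = 0).
Hypothesis ker_line : forall x : A', f x = 0 -> exists c : E, x = c *: e.

(* If [n e = b e] with [b != 0], then [n - b] is a unit by locality and kills [e]. *)
Lemma nonunit_mul_ker (n z : A') : n \isn't a GRing.unit -> f z = 0 -> n * z = 0.
Proof.
move=> n_nonunit fz0.
have ne0 : n * e = 0.
  have [b neb] : exists b : E, n * e = b *: e by apply: ker_line; rewrite rmorphM fe0 mulr0.
  have [b0|b_nz] := eqVneq b 0; first by rewrite neb b0 scale0r.
  have nb_unit : n - b%:A \is a GRing.unit.
    apply/negPn/negP => nb_nonunit.
    have := @A'_local n (- (n - b%:A)) n_nonunit.
    rewrite unitrN => /(_ nb_nonunit); rewrite opprB addrC subrK => /negP; apply.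
    exact: scalar_unit.
  have nbe0 : (n - b%:A) * e = 0 by rewrite mulrBl mulr_algl neb subrr.
  by move/negP: e_nz; case; rewrite -(mulKr nb_unit e) nbe0 mulr0.
by have [k ->] := ker_line fz0; rewrite -scalerAr ne0 scaler0.
Qed.

Lemma ker_sqr0 (z : A') : f z = 0 -> z * z = 0.
Proof.
move=> fz0; apply: nonunit_mul_ker => //; apply/negP => /(rmorph_unit f).
by rewrite fz0 unitr0.
Qed.

Hypothesis f_surj : forall a : A, exists a' : A', f a' = a.

Lemma lift_unit (a : A') : f a \is a GRing.unit -> a \is a GRing.unit.
Proof.
case/unitrPr => d fad; have [d' fd'] := f_surj d.
have ad'_1 : f (a * d' - 1) = 0 by rewrite rmorphB rmorphM rmorph1 fd' fad subrr.
have : a * d' \is a GRing.unit.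
  by rewrite -[a * d'](subrK 1) addrC; apply/unitrD1_sqr0/ker_sqr0.
by rewrite unitrM => /andP[].
Qed.

Hypothesis charE0 : [pchar E] =i pred0.
Variable n : nat.

Let n_unit : (n.+1%:R : A') \is a GRing.unit := @natr_unit_pchar0 E A' n.+1 charE0 isT.

Lemma ker_root1_eq0 (t : A') : f t = 0 -> (1 + t) ^+ n.+1 = 1 -> t = 0.
Proof.
move=> ft0; rewrite exprD1_sqr0 ?ker_sqr0 // -mulr_natl.
by rewrite -[X in _ = X]addr0 => /addrI nt0; rewrite -(mulKr n_unit t) nt0 mulr0.
Qed.

Lemma ker_root_exists (d u : A') : d \is a GRing.unit -> f u = f d ->
  exists2 t : A', f t = 0 & (1 + t) ^+ n.+1 * d = u.
Proof.
move=> d_unit fud; set t := (n.+1%:R)^-1 * (u - d) * d^-1.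
have ft0 : f t = 0 by rewrite !rmorphM rmorphB fud subrr mulr0 mul0r.
exists t => //; rewrite exprD1_sqr0 ?ker_sqr0 // -mulr_natl mulrDl mul1r /t.
by rewrite -(mulrA n.+1%:R) divrK // mulVKr // addrC subrK.
Qed.

End SquareZeroKernel.

Section NaturalMap.
Variables (E : fieldType) (A' A : comUnitAlgType E) (f : {lrmorphism A' -> A}).
Variable n : nat.

Lemma nat_map_fibre_elt (x : 'M[A']_n) :
  x \in unitmx -> let t := nat_map f x in fibre_elt f t.1.1 t.1.2 t.2.
Proof.
move=> x_unit; have det_unit : \det x \is a GRing.unit by rewrite -unitmxE.
split; rewrite /= ?det_map_mx //; last exact: pgl_eq_refl.
by rewrite unitmxE det_map_mx rmorph_unit.
Qed.

Lemma nat_mapM (x y : 'M[A']_n) :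
  fibre_eq (nat_map f (x *m y)) (fibre_mul (nat_map f x) (nat_map f y)).
Proof. by split; rewrite /= ?map_mxM ?det_mulmx //; apply: pgl_eq_refl. Qed.

Hypothesis A'_local : forall x y : A',
  x \isn't a GRing.unit -> y \isn't a GRing.unit -> x + y \isn't a GRing.unit.
Hypothesis f_ker : ker_dim1 f.
Hypothesis f_surj : forall a : A, exists a' : A', f a' = a.
Hypothesis charE0 : [pchar E] =i pred0.

Lemma nat_map_inj (x y : 'M[A']_n.+1) : x \in unitmx -> y \in unitmx ->
  fibre_eq (nat_map f x) (nat_map f y) -> x = y.
Proof.
case: f_ker => e [e_nz fe0] ker_line x_unit _ [[c _]]; rewrite /nat_map /= => -> fcx detcx.
suff -> : c = 1 by rewrite scale1r.
have fxU : map_mx f x \in unitmx by rewrite unitmxE det_map_mx rmorph_unit // -unitmxE.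
have fc10 : f (c - 1) = 0.
  apply/eqP; rewrite rmorphB rmorph1 subr_eq0; apply/eqP.
  by apply: scalemx_eq1 fxU _; rewrite -map_mxZ -fcx.
have c_root1 : (1 + (c - 1)) ^+ n.+1 = 1.
  rewrite addrC subrK; apply: (mulIr (_ : \det x \is a GRing.unit)); first by rewrite -unitmxE.
  by rewrite mul1r -detZ.
by rewrite -[c](subrK 1) addrC (ker_root1_eq0 A'_local e_nz fe0 ker_line charE0 fc10 c_root1) addr0.
Qed.

Lemma nat_map_surj (h : 'M[A']_n.+1) (g : 'M[A]_n.+1) (u : A') : fibre_elt f h g u ->
  exists2 x : 'M[A']_n.+1, x \in unitmx & fibre_eq (nat_map f x) (h, g, u).
Proof.
case: f_ker => e [e_nz fe0] ker_line [h_unit _ u_unit [c c_unit ->] detg].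
have [c' fc'] := f_surj c.
have c'_unit : c' \is a GRing.unit.
  by apply: (lift_unit A'_local e_nz fe0 ker_line f_surj); rewrite -fc' in c_unit.
have d_unit : c' ^+ n.+1 * \det h \is a GRing.unit by rewrite unitrM unitrX // -unitmxE.
have [|t ft0 detx] := ker_root_exists A'_local e_nz fe0 ker_line charE0 n d_unit (u := u).
  by move: detg; rewrite detZ det_map_mx -fc' rmorphM rmorphXn => ->.
have s_unit : (1 + t) * c' \is a GRing.unit.
  by rewrite unitrM c'_unit andbT unitrD1_sqr0 // (ker_sqr0 A'_local e_nz fe0 ker_line).
have detx_u : \det (((1 + t) * c') *: h) = u by rewrite detZ exprMn -mulrA.
exists (((1 + t) * c') *: h); first by rewrite unitmxE detx_u.
split => //=; first by exists ((1 + t) * c')^-1; rewrite ?unitrV // scalerA mulVr ?scale1r.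
by rewrite -fc' map_mxZ rmorphM rmorphD rmorph1 ft0 addr0 mul1r.
Qed.

End NaturalMap.

Theorem lemma14 (E : fieldType) (charE0 : [pchar E] =i pred0)
  (A' A : comUnitAlgType E) (CE_A' : in_CE A') (CE_A : in_CE A)
  (f : {lrmorphism A' -> A}) (f_surj : forall a : A, exists a' : A', f a' = a)
  (f_ker : ker_dim1 f) (m : nat) (m_pos : (0 < m)%N) :
  nat_map_iso f m.
Proof.
case: CE_A' => _ A'_local _; case: m m_pos => // n _.
split.
- exact: nat_map_fibre_elt.
- by move=> x y _ _; apply: nat_mapM.
- exact: nat_map_inj A'_local f_ker charE0.
- exact: nat_map_surj A'_local f_ker f_surj charE0.
Qed.
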